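(* For the Curie–Weiss model, for every fixed $0\le\beta<1$ and every integer $n\ge2$ there is a constant $C=C(n,\beta)>0$ such that for all $N\ge 2n$ and all pairwise distinct indices $i_1,j_1,\dots,i_n,j_n\in\{1,\dots,N\}$, $$\bigl|\langle\sigma_{i_1}\sigma_{j_1},\sigma_{i_2}\sigma_{j_2},\dots,\sigma_{i_n}\sigma_{j_n}\rangle_c\bigr|\le\frac{C}{N}.$$
   Context: Curie–Weiss model: for $\sigma\in\{-1,1\}^N$, $\mathcal H_N(\sigma)=-\frac1N\sum_{1\le i<j\le N}\sigma_i\sigma_j$, $Z_N(\beta)=\sum_\sigma e^{-\beta\mathcal H_N(\sigma)}$, and $\langle A\rangle=Z_N(\beta)^{-1}\sum_\sigma A(\sigma)e^{-\beta\mathcal H_N(\sigma)}$. The pairwise $n$-point connected correlation is the joint cumulant of $X_k=\sigma_{i_k}\sigma_{j_k}$, $k=1,\dots,n$, under $\langle\cdot\rangle$: $$\langle X_1,\dots,X_n\rangle_c=\sum_{\pi}(-1)^{|\pi|-1}(|\pi|-1)!\prod_{B\in\pi}\Bigl\langle\prod_{k\in B}X_k\Bigr\rangle,$$ the sum running over all set partitions $\pi$ of $\{1,\dots,n\}$ ($|\pi|$ = number of blocks); equivalently $\langle X_1,\dots,X_n\rangle_c=\langle X_1\cdots X_n\rangle$ minus the sum over all nontrivial partitions of products of lower-order connected correlations of the blocks. *)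

From HB Require Import structures.
From mathcomp Require Import all_boot all_order all_algebra.
From mathcomp Require Import reals.
From mathcomp Require Import sequences exp.
Set Implicit Arguments. Unset Strict Implicit. Unset Printing Implicit Defensive.
Import Order.TTheory GRing.Theory Num.Theory.
Local Open Scope ring_scope.

(* A configuration sigma in {-1,1}^N is encoded as a boolean finfun;
   the spin value is +1 for true and -1 for false. *)
Definition config (N : nat) := {ffun 'I_N -> bool}.

Definition spin {R : realType} {N : nat} (s : config N) (i : 'I_N) : R :=
  if s i then 1 else -1.

Definition CW_H {R : realType} (N : nat) (s : config N) : R :=
  - (N%:R)^-1 * \sum_(i : 'I_N) \sum_(j : 'I_N | (i < j)%N) spin s i * spin s j.

Definition CW_weight {R : realType} (N : nat) (beta : R) (s : config N) : R :=
  expR (- beta * CW_H s).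

Definition CW_Z {R : realType} (N : nat) (beta : R) : R :=
  \sum_(s : config N) CW_weight beta s.

Definition CW_gibbs {R : realType} (N : nat) (beta : R) (A : config N -> R) : R :=
  (CW_Z N beta)^-1 * \sum_(s : config N) A s * CW_weight beta s.

Definition set_partitions (n : nat) : {set {set {set 'I_n}}} :=
  [set P : {set {set 'I_n}} | partition P [set: 'I_n]].

Definition cumulant {R : realType} (N n : nat) (beta : R)
    (X : 'I_n -> config N -> R) : R :=
  \sum_(P in set_partitions n)
     (-1) ^+ (#|P|.-1) * ((#|P|.-1)`!)%:R *
     \prod_(B in P) CW_gibbs beta (fun s => \prod_(k in B) X k s).

Definition pair_corr {R : realType} (N n : nat) (beta : R)
    (i j : 'I_n -> 'I_N) : R :=
  cumulant beta (fun k s => spin s (i k) * spin s (j k)).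

Definition pairwise_distinct (N n : nat) (i j : 'I_n -> 'I_N) : Prop :=
  injective i /\ injective j /\ (forall k l, i k <> j l).

(* Every block of a set partition of the pairs contributes a moment
   <prod_(k in B) s_(i_k) s_(j_k)> = <s_A> with A a nonempty set of distinct
   sites, and all other factors are bounded by 1, so it suffices to show that
   <s_A> = O(1/N) for |A| <= 2n.  Flipping the spin s_a, a in A, leaves the
   cavity field h_a = (beta/N) sum_(c != a) s_c unchanged, which gives
   <s_a f> = <tanh(h_a) f> whenever f does not depend on s_a.  Replacing
   tanh h_a by h_a costs <h_a^2> = O(1/N), obtained from the same identity
   applied to <m^2>, and expanding h_a bounds N |<s_A>| by beta times
   |A| + N max_(|A'| = |A|) |<s_A'>| plus O(1); as beta < 1 this
   self-consistent inequality bounds the maximum by O(1/N). *)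

From Pilot Require Import Defs.
From HB Require Import structures.
From mathcomp Require Import all_boot all_order all_algebra.
From mathcomp Require Import reals.
From mathcomp Require Import sequences exp.
From mathcomp Require Import topology normedtype derive.
From mathcomp Require Import ring lra.
Set Implicit Arguments.
Unset Strict Implicit.
Unset Printing Implicit Defensive.

Import Order.TTheory GRing.Theory Num.Theory.
Import numFieldNormedType.Exports.
Local Open Scope ring_scope.

Section Tanh.
Variable R : realType.

Definition tanh (y : R) := (expR y - expR (- y)) / (expR y + expR (- y)).

Lemma expR_sum_gt0 (y : R) : 0 < expR y + expR (- y).
Proof. by rewrite addr_gt0 ?expR_gt0. Qed.

Lemma tanhN (y : R) : tanh (- y) = - tanh y.
Proof. by rewrite /tanh opprK -mulNr opprB [expR y + _]addrC. Qed.

Lemma tanh_mean0 (y : R) :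
  (1 - tanh y) * expR y + (-1 - tanh y) * expR (- y) = 0.
Proof. by rewrite /tanh; field; rewrite gt_eqF ?expR_sum_gt0. Qed.

(* The difference vanishes at 0 and has derivative [y (expR y - expR (- y)) >= 0]. *)
Lemma ler_mul_expR_expRN (y : R) : 0 <= y -> (1 - y) * expR y <= (1 + y) * expR (- y).
Proof.
move=> y_ge0; rewrite -subr_ge0.
pose g x : R := (1 + x) * expR (- x) - (1 - x) * expR x.
have g_der (x : R) : is_derive x (1 : R) g (x * expR x - x * expR (- x)).
  by apply: trigger_derive; rewrite /GRing.scale /=; ring.
have g0 : g 0 = 0 by rewrite /g oppr0 expR0; lra.
move: y_ge0; rewrite le_eqVlt => /orP[/eqP <-|y_gt0]; first by rewrite -/(g 0) g0.
have g_cont : continuous g.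
  by move=> x; apply/differentiable_continuous/derivable1_diffP; case: (g_der x).
have [c] := MVT y_gt0 (fun x _ => g_der x) (continuous_subspaceT g_cont).
rewrite in_itv /= => /andP[c_gt0 _]; rewrite g0 !subr0 -/(g y) => ->.
rewrite mulr_ge0 ?(ltW y_gt0) // -mulrBr mulr_ge0 ?(ltW c_gt0) //.
by rewrite subr_ge0 ler_expR; lra.
Qed.

Lemma tanh_ge0 (y : R) : 0 <= y -> 0 <= tanh y.
Proof.
by move=> y0; rewrite divr_ge0 ?(ltW (expR_sum_gt0 _)) // subr_ge0 ler_expR; lra.
Qed.

Lemma tanh_le (y : R) : 0 <= y -> tanh y <= y.
Proof.
move=> y0; rewrite ler_pdivrMr ?expR_sum_gt0 //.
have := ler_mul_expR_expRN y0; lra.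
Qed.

Lemma tanh_ge (y : R) : 0 <= y -> y - y ^+ 2 <= tanh y.
Proof.
move=> y0; have [y1|y1] := leP 1 y; first by apply: le_trans (tanh_ge0 y0); nra.
rewrite ler_pdivlMr ?expR_sum_gt0 //.
have hA := expR_ge1Dx y; have hB := expR_ge1Dx (- y).
have AB : expR y * expR (- y) = 1 by rewrite -expRD subrr expR0.
have := expR_gt0 y; have := expR_gt0 (- y); nra.
Qed.

Lemma mul_tanh_le_sqr (y : R) : y * tanh y <= y ^+ 2.
Proof.
have [y0|y0] := leP 0 y; first by rewrite expr2 ler_wpM2l // tanh_le.
have ny0 : 0 <= - y by rewrite oppr_ge0 ltW.
have := tanh_le ny0; rewrite tanhN; nra.
Qed.

Lemma norm_tanh_sub_le_sqr (y : R) : `|tanh y - y| <= y ^+ 2.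
Proof.
rewrite ler_norml; have [y0|y0] := leP 0 y.
  by have := tanh_le y0; have := tanh_ge y0; lra.
have ny0 : 0 <= - y by rewrite oppr_ge0 ltW.
have := tanh_le ny0; have := tanh_ge ny0; rewrite tanhN sqrrN; lra.
Qed.

Lemma tanhM_mul_le (c x : R) : 0 <= c -> tanh (c * x) * x <= c * x ^+ 2.
Proof.
rewrite le_eqVlt => /orP[/eqP <-|c_gt0]; first by rewrite !mul0r /tanh oppr0 subrr !mul0r.
have -> : tanh (c * x) * x = c^-1 * (c * x * tanh (c * x)) by field; rewrite gt_eqF.
by rewrite ler_pdivrMl // (_ : c * (c * x ^+ 2) = (c * x) ^+ 2) ?mul_tanh_le_sqr //; ring.
Qed.

End Tanh.

Lemma sum_pairs_lt (R : comPzRingType) (N : nat) (x : 'I_N -> R) :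
  2 * \sum_(i : 'I_N) \sum_(j : 'I_N | (i < j)%N) x i * x j =
  (\sum_i x i) ^+ 2 - \sum_i x i ^+ 2.
Proof.
have gt_lt : \sum_(i : 'I_N) \sum_(j : 'I_N | (j < i)%N) x i * x j =
             \sum_(i : 'I_N) \sum_(j : 'I_N | (i < j)%N) x i * x j.
  rewrite (exchange_big_dep predT) //=.
  by apply: eq_bigr => i _; apply: eq_bigr => j _; rewrite mulrC.
have split_row i : \sum_(j : 'I_N) x i * x j =
    \sum_(j : 'I_N | (i < j)%N) x i * x j + x i ^+ 2 +
    \sum_(j : 'I_N | (j < i)%N) x i * x j.
  rewrite (bigID (fun j : 'I_N => (i < j)%N)) /= -addrA; congr (_ + _).
  rewrite (bigD1 i) /= ?ltnn // expr2; congr (_ + _).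
  by apply: eq_bigl => j; rewrite -leqNgt andbC ltn_neqAle -val_eqE.
have -> : (\sum_i x i) ^+ 2 = \sum_i \sum_(j : 'I_N) x i * x j.
  by rewrite expr2 mulr_suml; apply: eq_bigr => i _; rewrite mulr_sumr.
by rewrite (eq_bigr _ (fun i _ => split_row i)) !big_split /= gt_lt; ring.
Qed.

Section GibbsState.
Variables (R : realType) (N : nat) (beta : R).

Local Notation spin := (@spin R N).
Local Notation weight := (@CW_weight R N beta).
Local Notation gibbs := (@CW_gibbs R N beta).

Lemma CW_weight_gt0 s : 0 < weight s.
Proof. exact: expR_gt0. Qed.

Lemma CW_Z_gt0 : 0 < CW_Z N beta.
Proof.
rewrite /CW_Z (bigD1 [ffun=> true]) //= ltr_pwDl ?CW_weight_gt0 //.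
by rewrite sumr_ge0 // => s _; rewrite ltW ?CW_weight_gt0.
Qed.

Lemma eq_gibbs f g : f =1 g -> gibbs f = gibbs g.
Proof. by move=> fg; rewrite /CW_gibbs; under eq_bigr do rewrite fg. Qed.

Lemma gibbsD f g : gibbs (fun s => f s + g s) = gibbs f + gibbs g.
Proof.
rewrite /CW_gibbs -mulrDr -big_split /=; congr (_ * _).
by apply: eq_bigr => s _; rewrite mulrDl.
Qed.

Lemma gibbsMl c f : gibbs (fun s => c * f s) = c * gibbs f.
Proof.
rewrite /CW_gibbs mulrCA; congr (_ * _); rewrite mulr_sumr.
by apply: eq_bigr => s _; rewrite mulrA.
Qed.

Lemma gibbs_sum (I : Type) (r : seq I) (P : pred I) (F : I -> config N -> R) :
  gibbs (fun s => \sum_(k <- r | P k) F k s) = \sum_(k <- r | P k) gibbs (F k).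
Proof.
rewrite /CW_gibbs -mulr_sumr; under eq_bigr do rewrite mulr_suml.
by rewrite exchange_big.
Qed.

Lemma gibbs_cst c : gibbs (fun=> c) = c.
Proof.
by rewrite /CW_gibbs -mulr_sumr mulrCA -/(CW_Z N beta) mulVf ?mulr1 ?gt_eqF ?CW_Z_gt0.
Qed.

Lemma ler_gibbs f g : (forall s, f s <= g s) -> gibbs f <= gibbs g.
Proof.
move=> fg; rewrite /CW_gibbs ler_wpM2l ?invr_ge0 ?(ltW CW_Z_gt0) //.
by apply: ler_sum => s _; rewrite ler_wpM2r ?fg ?(ltW (CW_weight_gt0 s)).
Qed.

Lemma gibbs_ge0 f : (forall s, 0 <= f s) -> 0 <= gibbs f.
Proof. by move=> f_ge0; rewrite -(gibbs_cst 0); apply: ler_gibbs. Qed.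

Lemma ler_norm_gibbs f : `|gibbs f| <= gibbs (fun s => `|f s|).
Proof.
rewrite /CW_gibbs normrM ger0_norm ?invr_ge0 ?(ltW CW_Z_gt0) //.
rewrite ler_wpM2l ?invr_ge0 ?(ltW CW_Z_gt0) //.
apply: le_trans (ler_norm_sum _ _ _) _; apply: ler_sum => s _.
by rewrite normrM (ger0_norm (ltW (CW_weight_gt0 s))).
Qed.

Lemma gibbs_norm_le f c : (forall s, `|f s| <= c) -> `|gibbs f| <= c.
Proof.
move=> fc; apply: le_trans (ler_norm_gibbs f) _.
by rewrite -[leRHS](gibbs_cst c); apply: ler_gibbs.
Qed.

Lemma spinE s i : spin s i = 1 \/ spin s i = -1.
Proof. by rewrite /Defs.spin; case: (s i); [left|right]. Qed.

Lemma spin_sqr s i : spin s i ^+ 2 = 1.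
Proof. by case: (spinE s i) => ->; rewrite ?sqrrN expr1n. Qed.

Lemma norm_spin s i : `|spin s i| = 1.
Proof. by case: (spinE s i) => ->; rewrite ?normrN normr1. Qed.

Definition magn (s : config N) : R := \sum_i spin s i.

Lemma CW_H_magn s : CW_H s = - (N%:R)^-1 * ((magn s ^+ 2 - N%:R) / 2).
Proof.
have sum_sqr : \sum_i spin s i ^+ 2 = N%:R.
  by under eq_bigr do rewrite spin_sqr; rewrite sumr_const card_ord.
by rewrite /CW_H /magn -sum_sqr -sum_pairs_lt [2 * _]mulrC mulfK ?pnatr_eq0.
Qed.

Definition magn_out (a : 'I_N) (s : config N) : R := \sum_(c | c != a) spin s c.

Definition cavity_field (a : 'I_N) (s : config N) : R := beta / N%:R * magn_out a s.

Definition cavity_weight (a : 'I_N) (s : config N) : R :=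
  expR (beta / N%:R * ((magn_out a s ^+ 2 + 1 - N%:R) / 2)).

Lemma magn_split a s : magn s = spin s a + magn_out a s.
Proof. exact: bigD1. Qed.

Lemma CW_weight_split a s :
  weight s = expR (cavity_field a s * spin s a) * cavity_weight a s.
Proof.
rewrite /CW_weight CW_H_magn (magn_split a) -expRD /cavity_field; congr expR.
set t := (N%:R)^-1; by case: (spinE s a) => ->; field.
Qed.

Definition flip (a : 'I_N) (s : config N) : config N :=
  [ffun i => if i == a then ~~ s a else s i].

Lemma flipK a : involutive (flip a).
Proof.
move=> s; apply/ffunP => i; rewrite !ffunE.
by case: eqP => [->|//]; rewrite eqxx negbK.
Qed.

Lemma spin_flip a s : spin (flip a s) a = - spin s a.
Proof. by rewrite /Defs.spin ffunE eqxx; case: (s a); rewrite ?opprK. Qed.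

Lemma spin_flip_neq a c s : c != a -> spin (flip a s) c = spin s c.
Proof. by move=> ca; rewrite /Defs.spin ffunE (negbTE ca). Qed.

Lemma magn_out_flip a s : magn_out a (flip a s) = magn_out a s.
Proof. by apply: eq_bigr => c ca; rewrite spin_flip_neq. Qed.

Lemma cavity_field_flip a s : cavity_field a (flip a s) = cavity_field a s.
Proof. by rewrite /cavity_field magn_out_flip. Qed.

Lemma cavity_weight_flip a s : cavity_weight a (flip a s) = cavity_weight a s.
Proof. by rewrite /cavity_weight magn_out_flip. Qed.

(* Pair each configuration with its flip at [a]: the cavity field and the
   cavity weight are unchanged, and [tanh] is the resulting mean of [spin s a]. *)
Lemma gibbs_spin_tanh a f : (forall s, f (flip a s) = f s) ->
  gibbs (fun s => spin s a * f s) = gibbs (fun s => tanh (cavity_field a s) * f s).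
Proof.
move=> f_flip; rewrite /CW_gibbs; congr (_ * _); apply/eqP; rewrite -subr_eq0 -sumrB.
pose G s := spin s a * f s * weight s - tanh (cavity_field a s) * f s * weight s.
have G_flip s : G s + G (flip a s) = 0.
  rewrite /G !(CW_weight_split a) f_flip spin_flip.
  rewrite cavity_field_flip cavity_weight_flip.
  rewrite -(mulr0 (f s * cavity_weight a s)) -(tanh_mean0 (cavity_field a s)).
  by case: (spinE s a) => ->; rewrite ?mulr1 ?mulrN1 ?opprK ?mulr1; ring.
have sum_flip : \sum_s G s = \sum_s G (flip a s).
  exact: reindex_inj (can_inj (flipK a)).
have : \sum_s G s + \sum_s G s = 0.
  by rewrite {2}sum_flip -big_split; apply: big1 => s _; apply: G_flip.
by rewrite -[X in X == 0]/(\sum_s G s); lra.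
Qed.

Lemma magn_out_magn a s : magn_out a s = magn s - spin s a.
Proof. by rewrite (magn_split a) addrC addKr. Qed.

Lemma magn_sqr_sum s : magn s ^+ 2 = \sum_a (1 + spin s a * magn_out a s).
Proof.
rewrite expr2 {1}/magn mulr_suml; apply: eq_bigr => a _.
by rewrite (magn_split a) mulrDr -expr2 spin_sqr.
Qed.

Lemma sum_magn_out_sqr s :
  \sum_a magn_out a s ^+ 2 = (N%:R - 2) * magn s ^+ 2 + N%:R.
Proof.
have sqr_a a : magn_out a s ^+ 2 = (magn s ^+ 2 + 1) - 2 * magn s * spin s a.
  by rewrite magn_out_magn sqrrB spin_sqr; ring.
rewrite (eq_bigr _ (fun a _ => sqr_a a)) sumrB sumr_const card_ord -mulr_sumr.
by rewrite -/(magn s) -mulr_natr; ring.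
Qed.

Hypothesis beta_ge0 : 0 <= beta.
Hypothesis beta_lt1 : beta < 1.
Hypothesis N_gt0 : (0 < N)%N.

Let N_ge1 : 1 <= (N%:R : R). Proof. by rewrite ler1n. Qed.
Let N_neq0 : (N%:R : R) != 0. Proof. by rewrite pnatr_eq0 -lt0n. Qed.

(* By [m^2 = sum_a (1 + s_a m_a)] and [y tanh y <= y^2], where [m_a] is the
   magnetisation outside [a], one gets [<m^2> <= N + beta <m^2> + beta]. *)
Lemma gibbs_magn_sqr_le : gibbs (fun s => magn s ^+ 2) * (1 - beta) <= N%:R + 1.
Proof.
set X := gibbs _.
have cavity_le a : gibbs (fun s => spin s a * magn_out a s) <=
                   beta / N%:R * gibbs (fun s => magn_out a s ^+ 2).
  rewrite (gibbs_spin_tanh (magn_out_flip a)) -gibbsMl; apply: ler_gibbs => s.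
  by apply: tanhM_mul_le; rewrite divr_ge0.
have sum_out : \sum_a gibbs (fun s => magn_out a s ^+ 2) = (N%:R - 2) * X + N%:R.
  by rewrite -gibbs_sum (eq_gibbs sum_magn_out_sqr) gibbsD gibbsMl gibbs_cst.
have X_le : X <= N%:R + beta / N%:R * ((N%:R - 2) * X + N%:R).
  rewrite {1}/X (eq_gibbs magn_sqr_sum) gibbs_sum.
  apply: le_trans (_ : \sum_a (1 + beta / N%:R * gibbs (fun s => magn_out a s ^+ 2)) <= _).
    by apply: ler_sum => a _; rewrite gibbsD gibbs_cst lerD2l cavity_le.
  by rewrite big_split /= sumr_const card_ord -mulr_sumr sum_out.
have X_ge0 : 0 <= X by apply: gibbs_ge0 => s; apply: sqr_ge0.
have expand : beta / N%:R * ((N%:R - 2) * X + N%:R) =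
              beta * X + beta - 2 * (beta * X / N%:R).
  by field.
rewrite expand in X_le.
have : 0 <= beta * X / N%:R by exact: divr_ge0 (mulr_ge0 beta_ge0 X_ge0) (ler0n _ _).
by move: X_le beta_lt1; clearbody X; move: (beta * X / N%:R) => e; nra.
Qed.

Lemma gibbs_cavity_field_sqr_le a :
  gibbs (fun s => cavity_field a s ^+ 2) * N%:R <= 6 / (1 - beta).
Proof.
have out_le : gibbs (fun s => magn_out a s ^+ 2) <= 2 * gibbs (fun s => magn s ^+ 2) + 2.
  rewrite -gibbsMl -[X in _ + X](gibbs_cst 2) -gibbsD; apply: ler_gibbs => s.
  rewrite magn_out_magn; have := spin_sqr s a; have := sqr_ge0 (magn s + spin s a); nra.
have -> : gibbs (fun s => cavity_field a s ^+ 2) * N%:R =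
          beta ^+ 2 / N%:R * gibbs (fun s => magn_out a s ^+ 2).
  rewrite -gibbsMl mulrC -gibbsMl; apply: eq_gibbs => s.
  by rewrite /cavity_field; field.
have out_le' : gibbs (fun s => magn_out a s ^+ 2) * (1 - beta) <= 6 * N%:R.
  have beta_le1 : 0 <= 1 - beta by rewrite subr_ge0 ltW.
  apply: le_trans (ler_wpM2r beta_le1 out_le) _.
  have magn_le := gibbs_magn_sqr_le; rewrite mulrDl -mulrA.
  move: magn_le beta_ge0 N_ge1.
  by set Z := gibbs (fun s => magn s ^+ 2) * (1 - beta); clearbody Z; lra.
rewrite ler_pdivlMr ?subr_gt0 // -(mulrA (beta ^+ 2 / N%:R)).
apply: le_trans (_ : beta ^+ 2 / N%:R * (6 * N%:R) <= _).
  by apply: ler_wpM2l; rewrite ?divr_ge0 ?sqr_ge0.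
have -> : beta ^+ 2 / N%:R * (6 * N%:R) = 6 * beta ^+ 2 by field.
by rewrite ler_piMr // expr_le1 // ltW.
Qed.

Definition spin_prod (B : {set 'I_N}) (s : config N) : R := \prod_(i in B) spin s i.

Lemma norm_spin_prod B s : `|spin_prod B s| = 1.
Proof. by rewrite normr_prod big1 // => i _; rewrite norm_spin. Qed.

Lemma spin_prod_flip (a : 'I_N) (B : {set 'I_N}) s :
  a \notin B -> spin_prod B (flip a s) = spin_prod B s.
Proof.
by move=> aB; apply: eq_bigr => i iB; rewrite spin_flip_neq //; apply: contraNneq aB => <-.
Qed.

Lemma spin_prodD1 (a : 'I_N) (B : {set 'I_N}) s :
  a \in B -> spin_prod B s = spin s a * spin_prod (B :\ a) s.
Proof. exact: big_setD1. Qed.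

Lemma spin_prodU1 (c : 'I_N) (B : {set 'I_N}) s :
  c \notin B -> spin_prod (c |: B) s = spin s c * spin_prod B s.
Proof. exact: big_setU1. Qed.

(* In the expansion of the cavity field, the terms with [c \in B] are bounded
   by 1 and the others are correlations of the same order [#|B|]. *)
Lemma norm_sum_gibbs_spin_mul_le (a : 'I_N) (B : {set 'I_N}) (M : R) :
  a \in B -> (forall B' : {set 'I_N}, #|B'| = #|B| -> `|gibbs (spin_prod B')| <= M) ->
  `|\sum_(c | c != a) gibbs (fun s => spin s c * spin_prod (B :\ a) s)|
    <= #|B|%:R + N%:R * M.
Proof.
move=> aB corr_le; apply: le_trans (ler_norm_sum _ _ _) _.
have M_ge0 : 0 <= M by apply: le_trans (corr_le B erefl).
apply: le_trans (_ : \sum_c ((c \in B)%:R + M) <= _); last first.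
  rewrite big_split /= sumr_const card_ord mulr_natl -natr_sum -sum1_card.
  by rewrite [(\sum_(i in B) 1)%N]big_mkcond.
rewrite [leRHS](bigD1 a) //= ler_wpDl ?addr_ge0 //; apply: ler_sum => c ca.
have [cB|cNB] := boolP (c \in B).
  apply: le_trans (ler_wpDr _ _) => //; apply: gibbs_norm_le => s.
  by rewrite normrM norm_spin norm_spin_prod mul1r.
have cNBa : c \notin B :\ a by rewrite !inE (negPf cNB) andbF.
rewrite add0r -(eq_gibbs (fun s => spin_prodU1 s cNBa)).
by apply: corr_le; rewrite cardsU1 cNBa (cardsD1 a B) aB.
Qed.

(* [spin s a] is traded for [tanh (cavity_field a s)], which is the cavity
   field up to an error of order [cavity_field a s ^+ 2 = O(1/N)]. *)
Lemma gibbs_spin_prod_step (B : {set 'I_N}) (a : 'I_N) (M : R) :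
  a \in B -> (forall B' : {set 'I_N}, #|B'| = #|B| -> `|gibbs (spin_prod B')| <= M) ->
  `|gibbs (spin_prod B)| * N%:R <= beta * (#|B|%:R + N%:R * M) + 6 / (1 - beta).
Proof.
move=> aB corr_le; set f := spin_prod (B :\ a).
have f_flip s : f (flip a s) = f s by apply: spin_prod_flip; rewrite setD11.
pose err s := (tanh (cavity_field a s) - cavity_field a s) * f s.
have -> : gibbs (spin_prod B) = gibbs (fun s => cavity_field a s * f s) + gibbs err.
  rewrite -gibbsD (eq_gibbs (fun s => spin_prodD1 s aB)) (gibbs_spin_tanh f_flip).
  by apply: eq_gibbs => s; rewrite /err; ring.
have -> : gibbs (fun s => cavity_field a s * f s) =
          beta / N%:R * \sum_(c | c != a) gibbs (fun s => spin s c * f s).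
  rewrite -gibbs_sum -gibbsMl; apply: eq_gibbs => s.
  by rewrite /cavity_field /magn_out -mulrA mulr_suml.
have err_le : `|gibbs err| * N%:R <= 6 / (1 - beta).
  apply: le_trans (gibbs_cavity_field_sqr_le a); rewrite ler_wpM2r ?ler0n //.
  apply: le_trans (ler_norm_gibbs _) (ler_gibbs _) => s.
  by rewrite normrM norm_spin_prod mulr1 norm_tanh_sub_le_sqr.
apply: le_trans (ler_wpM2r (ler0n _ _) (ler_normD _ _)) _.
rewrite mulrDl lerD // normrM ger0_norm ?divr_ge0 //.
rewrite mulrAC divfK //; apply: ler_wpM2l => //.
exact: norm_sum_gibbs_spin_mul_le aB corr_le.
Qed.

(* With [M] the largest correlation of order [#|B|], the step lemma gives
   [M N <= beta (#|B| + N M) + O(1)], which is solvable for [M N] as [beta < 1]. *)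
Lemma gibbs_spin_prod_le (B : {set 'I_N}) : B != set0 ->
  `|gibbs (spin_prod B)| * N%:R <= (#|B|%:R + 6 / (1 - beta)) / (1 - beta).
Proof.
move=> B_neq0; set m := #|B|; set q := 6 / (1 - beta).
have q_ge0 : 0 <= q by rewrite divr_ge0 // subr_ge0 ltW.
set M := \big[Order.max/0]_(B' : {set 'I_N} | #|B'| == m) `|gibbs (spin_prod B')|.
have corr_le (B' : {set 'I_N}) : #|B'| = m -> `|gibbs (spin_prod B')| <= M.
  by move=> cB'; apply: le_bigmax_cond; rewrite cB'.
have M_ge0 : 0 <= M by apply: le_trans (corr_le B erefl).
have MN_le : M * N%:R <= beta * (m%:R + N%:R * M) + q.
  rewrite -ler_pdivlMr ?ltr0n //; apply: bigmax_le => [|B' /eqP cB'].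
    by rewrite divr_ge0 ?addr_ge0 // mulr_ge0 // addr_ge0 // mulr_ge0.
  have [a aB'] : exists a, a \in B' by apply/set0Pn; rewrite -card_gt0 cB' card_gt0.
  rewrite ler_pdivlMr ?ltr0n // -cB'.
  by apply: gibbs_spin_prod_step aB' _ => B'' cB''; apply: corr_le; rewrite cB'' cB'.
rewrite ler_pdivlMr ?subr_gt0 //.
apply: le_trans (_ : M * N%:R * (1 - beta) <= _).
  apply: ler_wpM2r; first by rewrite subr_ge0 ltW.
  by apply: ler_wpM2r; rewrite ?corr_le.
have beta_m : beta * m%:R <= m%:R by rewrite ler_piMl // ltW.
by move: MN_le beta_m; rewrite [N%:R * M]mulrC; move: (M * N%:R) (m%:R : R) => P k; nra.
Qed.

End GibbsState.

Lemma norm_prod_partition_le (R : numDomainType) (n : nat) (P : {set {set 'I_n}})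
    (g : {set 'I_n} -> R) (e : R) :
  (0 < n)%N -> partition P [set: 'I_n] ->
  (forall B, `|g B| <= 1) -> (forall B, B != set0 -> `|g B| <= e) ->
  `|\prod_(B in P) g B| <= e.
Proof.
move=> n_gt0 /and3P[/eqP coverP _ _] g_le1 g_le.
have [B0 PB0 B0_neq0] : exists2 B0, B0 \in P & B0 != set0.
  have : Ordinal n_gt0 \in cover P by rewrite coverP inE.
  by case/bigcupP => B0 PB0 xB0; exists B0 => //; apply/set0Pn; exists (Ordinal n_gt0).
rewrite normr_prod (bigD1 B0) //=; apply: le_trans (g_le B0 B0_neq0).
rewrite -[leRHS]mulr1 ler_wpM2l //; apply: prodr_ile1 => B _; by rewrite normr_ge0 g_le1.
Qed.

Lemma norm_cumulant_le (R : realType) (N n : nat) (beta : R)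
    (X : 'I_n -> config N -> R) (e : R) :
  (0 < n)%N -> (forall k s, `|X k s| <= 1) ->
  (forall B : {set 'I_n}, B != set0 ->
     `|CW_gibbs beta (fun s => \prod_(k in B) X k s)| <= e) ->
  `|cumulant beta X| <= (\sum_(P in set_partitions n) ((#|P|.-1)`!)%:R) * e.
Proof.
move=> n_gt0 X_le1 moment_le; rewrite mulr_suml.
apply: le_trans (ler_norm_sum _ _ _) (ler_sum _ _) => P; rewrite inE => partP.
rewrite !normrM normrX normrN normr1 expr1n mul1r ger0_norm ?ler0n //.
apply: ler_wpM2l => //; apply: norm_prod_partition_le partP _ moment_le => // B.
apply: gibbs_norm_le => s; rewrite normr_prod.
by apply: prodr_ile1 => k _; rewrite normr_ge0 X_le1.
Qed.

Section PairObservables.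
Variables (R : realType) (N n : nat) (i j : 'I_n -> 'I_N).
Hypothesis ij_distinct : pairwise_distinct i j.

Lemma pair_support_disjoint (B : {set 'I_n}) : [disjoint i @: B & j @: B].
Proof.
have [_ [_ ij_neq]] := ij_distinct.
apply/pred0P => x /=; apply/negbTE/negP => /andP[/imsetP[k _ ->] /imsetP[l _]].
exact: ij_neq.
Qed.

Lemma prod_pair_spin (B : {set 'I_n}) (s : config N) :
  \prod_(k in B) (@spin R N s (i k) * spin s (j k)) =
  spin_prod R (i @: B :|: j @: B) s.
Proof.
have [i_inj [j_inj _]] := ij_distinct.
rewrite big_split /= /spin_prod (eq_bigl [predU i @: B & j @: B]) => [|x]; last first.
  by rewrite !inE.
rewrite bigU ?pair_support_disjoint //= !big_imset // => x y _ _.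
- exact: j_inj.
- exact: i_inj.
Qed.

Lemma card_pair_support (B : {set 'I_n}) : #|i @: B :|: j @: B| = (2 * #|B|)%N.
Proof.
have [i_inj [j_inj _]] := ij_distinct.
rewrite cardsU (disjoint_setI0 (pair_support_disjoint B)) cards0 subn0.
by rewrite !card_imset // mul2n addnn.
Qed.

Lemma gibbs_pair_prod_le (beta : R) (B : {set 'I_n}) :
  0 <= beta -> beta < 1 -> (0 < N)%N -> B != set0 ->
  `|CW_gibbs beta (fun s => \prod_(k in B) (@spin R N s (i k) * spin s (j k)))|
    <= ((2 * n)%:R + 6 / (1 - beta)) / (1 - beta) / N%:R.
Proof.
move=> beta_ge0 beta_lt1 N_gt0 B_neq0.
rewrite ler_pdivlMr ?ltr0n // (eq_gibbs beta (prod_pair_spin B)).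
apply: le_trans (gibbs_spin_prod_le _ _ _ _) _ => //.
  by rewrite -card_gt0 card_pair_support muln_gt0 card_gt0.
rewrite card_pair_support ler_pM2r ?invr_gt0 ?subr_gt0 //.
by rewrite lerD2r ler_nat leq_mul2l /= -[n in (_ <= n)%N]card_ord max_card.
Qed.

End PairObservables.

Theorem proposition2p6 (R : realType) (beta : R) (n : nat) :
  0 <= beta -> beta < 1 -> (2 <= n)%N ->
  exists C : R, 0 < C /\
    forall (N : nat), (2 * n <= N)%N ->
    forall (i j : 'I_n -> 'I_N), pairwise_distinct i j ->
      `|@pair_corr R N n beta i j| <= C / N%:R.
Proof.
move=> beta_ge0 beta_lt1 n_ge2; have n_gt0 : (0 < n)%N by apply: leq_trans n_ge2.
set K := ((2 * n)%:R + 6 / (1 - beta)) / (1 - beta).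
have K_gt0 : 0 < K.
  by rewrite divr_gt0 ?subr_gt0 // ltr_wpDr ?divr_ge0 ?subr_ge0 ?ltW // ltr0n muln_gt0.
set S := \sum_(P in set_partitions n) ((#|P|.-1)`!)%:R : R.
have S_ge0 : 0 <= S by apply: sumr_ge0 => P _; apply: ler0n.
exists ((S + 1) * K); split => [|N n2_le_N i j ij_distinct].
  by rewrite mulr_gt0 // ltr_wpDl.
have N_gt0 : (0 < N)%N by apply: leq_trans n2_le_N; rewrite muln_gt0.
apply: le_trans (_ : S * (K / N%:R) <= _).
  apply: norm_cumulant_le => // [k s|B B_neq0].
    by rewrite normrM !norm_spin mulr1.
  exact: gibbs_pair_prod_le.
by rewrite mulrA ler_pM2r ?invr_gt0 ?ltr0n // ler_pM2r // lerDl.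
Qed.
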